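(* Let $M=\begin{bmatrix} e & f\\ g & h\end{bmatrix}\in SL_2(\mathbb C)$, let $\mu=\operatorname{tr}M$ with $\mu^2\neq 4$, let $n\ge1$ be an integer, and put $X=S_{n-1}^2(\mu)$ and $Y=S_{n-1}(\mu)S_{n-2}(\mu)$. Then $$\sum_{i=0}^{n-1}(\mathrm{Ad}_M)^i=\frac{1}{\mu^2-4}\begin{bmatrix} C_{11}&C_{12}&C_{13}\\ C_{21}&C_{22}&C_{23}\\ C_{31}&C_{32}&C_{33}\end{bmatrix},$$ where $C_{11}=2nfg+h^2(2X-\mu Y)-2h(\mu X-2Y)+(\mu^2-2)X-\mu Y$, $C_{12}=2f\big(n(e-h)+h(2X-\mu Y)-\mu X+2Y\big)$, $C_{13}=f^2(2n-2X+\mu Y)$, $C_{21}=-g\big(n(h-e)-h(2X-\mu Y)+\mu X-2Y\big)$, $C_{22}=n(e-h)^2+2fg(2X-\mu Y)$, $C_{23}=f\big(n(e-h)+h(2X-\mu Y)-\mu X+(\mu^2-2)Y\big)$, $C_{31}=g^2(2n-2X+\mu Y)$, $C_{32}=-2g\big(n(h-e)-h(2X-\mu Y)+\mu X-(\mu^2-2)Y\big)$, $C_{33}=2nfg+h^2(2X-\mu Y)-2h\big(\mu X-(\mu^2-2)Y\big)+(\mu^2-2)X-(\mu^3-3\mu)Y$.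
   Context: $S_k(v)$ are the Chebyshev polynomials of the second kind: $S_0(v)=1$, $S_1(v)=v$, $S_k(v)=vS_{k-1}(v)-S_{k-2}(v)$ for all integers $k$ (so $S_{-1}=0$). For $P\in SL_2(\mathbb C)$, $\mathrm{Ad}_P$ is the linear map $g\mapsto PgP^{-1}$ on $sl_2(\mathbb C)$, written as a $3\times3$ matrix with respect to the ordered basis $E=\begin{bmatrix}0&1\\0&0\end{bmatrix}$, $H=\begin{bmatrix}1&0\\0&-1\end{bmatrix}$, $F=\begin{bmatrix}0&0\\1&0\end{bmatrix}$, the $j$-th column being the coordinates of the image of the $j$-th basis vector. *)

From HB Require Import structures.
From mathcomp Require Import all_boot all_order all_algebra.
From mathcomp Require Import complex.
From mathcomp Require Import reals.
Set Implicit Arguments. Unset Strict Implicit. Unset Printing Implicit Defensive.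
Import Order.TTheory GRing.Theory Num.Theory.
Local Open Scope ring_scope.

Fixpoint chebS_nat {K : nzRingType} (k : nat) (v : K) : K :=
  match k with
  | 0%N => 1
  | k'.+1 =>
      match k' with
      | 0%N => v
      | k''.+1 => v * chebS_nat k' v - chebS_nat k'' v
      end
  end.

(* Extension to all integer indices via S_k = v S_{k-1} - S_{k-2}:
   S_{-1} = 0 and S_{-m} = - S_{m-2} for m >= 2. *)
Definition chebS {K : nzRingType} (k : int) (v : K) : K :=
  match k with
  | Posz m => chebS_nat m v
  | Negz 0 => 0
  | Negz m.+1 => - chebS_nat m v
  end.

Definition sl2E {K : nzRingType} : 'M[K]_2 := \matrix_(i < 2, j < 2)
  (if (i == 0 :> nat) && (j == 1 :> nat) then 1 else 0).
Definition sl2H {K : nzRingType} : 'M[K]_2 := \matrix_(i < 2, j < 2)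
  (if (i == j) then (if i == 0 :> nat then 1 else -1) else 0).
Definition sl2F {K : nzRingType} : 'M[K]_2 := \matrix_(i < 2, j < 2)
  (if (i == 1 :> nat) && (j == 0 :> nat) then 1 else 0).

Definition sl2basis {K : nzRingType} (j : 'I_3) : 'M[K]_2 :=
  match val j with 0%N => sl2E | 1%N => sl2H | _ => sl2F end.

(* Coordinates of a traceless 2x2 matrix [[a, b], [c, -a]] = b E + a H + c F *)
Definition sl2coord {K : nzRingType} (A : 'M[K]_2) (i : 'I_3) : K :=
  match val i with 0%N => A 0 1 | 1%N => A 0 0 | _ => A 1 0 end.

Definition AdMx {K : comUnitRingType} (P : 'M[K]_2) : 'M[K]_3 :=
  \matrix_(i < 3, j < 3) sl2coord (P *m sl2basis j *m invmx P) i.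

Definition mx3 {K : nzRingType} (a11 a12 a13 a21 a22 a23 a31 a32 a33 : K)
  : 'M[K]_3 :=
  \matrix_(i < 3, j < 3)
    nth 0 (nth [::] [:: [:: a11; a12; a13]; [:: a21; a22; a23];
                        [:: a31; a32; a33]] i) j.

From HB Require Import structures.
From mathcomp Require Import all_boot all_order all_algebra.
From mathcomp Require Import complex.
From mathcomp Require Import reals.
From mathcomp Require Import ring.
Import Order.TTheory GRing.Theory Num.Theory.
Local Open Scope ring_scope.

(* Since [det M = 1], [M^-1] is the adjugate, so [Ad_M] has entries quadratic
   in those of M.  Call [N_n] the claimed numerator matrix.  Then
   [N_1 = (mu^2 - 4) I] and [(mu^2 - 4) I + Ad_M N_n = N_(n+1)] are polynomial
   identities modulo [eh - fg = 1], provided [X] and [Y] are advanced by the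
   Chebyshev recurrence; for [X = S_(n-1)^2] this uses the Cassini identity
   [S_k^2 - mu S_k S_(k-1) + S_(k-1)^2 = 1].  Summing the geometric series by
   induction on n gives the formula. *)

Definition mx2 {K : nzRingType} (a b c d : K) : 'M[K]_2 :=
  \matrix_(i < 2, j < 2) nth 0 (nth [::] [:: [:: a; b]; [:: c; d]] i) j.

Lemma mx2_eta {K : nzRingType} (M : 'M[K]_2) :
  M = mx2 (M 0 0) (M 0 1) (M 1 0) (M 1 1).
Proof.
apply/matrixP => i j; rewrite mxE.
by case: i j => -[|[|//]] ? -[[|[|//]] ?]; congr (M _ _); apply: val_inj.
Qed.

Lemma mxtrace_mx2 (K : nzRingType) (a b c d : K) : \tr (mx2 a b c d) = a + d.
Proof. by rewrite /mxtrace !big_ord_recl big_ord0 !mxE /= addr0. Qed.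

Lemma det_mx2 (K : comNzRingType) (a b c d : K) :
  \det (mx2 a b c d) = a * d - b * c.
Proof.
by rewrite (expand_det_row _ 0) !big_ord_recl big_ord0 /cofactor !det_mx11 !mxE /=; ring.
Qed.

Lemma adj_mx2 (K : comNzRingType) (a b c d : K) :
  \adj (mx2 a b c d) = mx2 d (- b) (- c) a.
Proof.
apply/matrixP => -[[|[|//]] ?] -[[|[|//]] ?].
all: by rewrite !mxE /cofactor det_mx11 !mxE /=; ring.
Qed.

Lemma invmx_mx2 (K : comUnitRingType) (a b c d : K) : a * d - b * c = 1 ->
  invmx (mx2 a b c d) = mx2 d (- b) (- c) a.
Proof.
by move=> det1; rewrite /invmx unitmxE det_mx2 det1 unitr1 invr1 scale1r adj_mx2.
Qed.

Definition Ad_mx3 {K : nzRingType} (e f g h : K) : 'M[K]_3 :=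
  mx3 (e ^+ 2) (- (2 * e * f)) (- f ^+ 2)
      (- (e * g)) (e * h + f * g) (f * h)
      (- g ^+ 2) (2 * g * h) (h ^+ 2).

Lemma AdMx_mx2 (K : comUnitRingType) (e f g h : K) : e * h - f * g = 1 ->
  AdMx (mx2 e f g h) = Ad_mx3 e f g h.
Proof.
move=> det1; rewrite /AdMx invmx_mx2 //.
apply/matrixP => -[[|[|[|//]]] ?] -[[|[|[|//]]] ?].
all: by rewrite !mxE /sl2coord /= !(mxE, big_ord_recl, big_ord0) /=; ring.
Qed.

Definition Ad_sum_numer {K : nzRingType} (e f g h m X Y : K) : 'M[K]_3 :=
  let mu := e + h in
  mx3
    (2 * m * f * g + h ^+ 2 * (2 * X - mu * Y) - 2 * h * (mu * X - 2 * Y)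
       + (mu ^+ 2 - 2) * X - mu * Y)
    (2 * f * (m * (e - h) + h * (2 * X - mu * Y) - mu * X + 2 * Y))
    (f ^+ 2 * (2 * m - 2 * X + mu * Y))
    (- g * (m * (h - e) - h * (2 * X - mu * Y) + mu * X - 2 * Y))
    (m * (e - h) ^+ 2 + 2 * f * g * (2 * X - mu * Y))
    (f * (m * (e - h) + h * (2 * X - mu * Y) - mu * X + (mu ^+ 2 - 2) * Y))
    (g ^+ 2 * (2 * m - 2 * X + mu * Y))
    (- 2 * g * (m * (h - e) - h * (2 * X - mu * Y) + mu * X
                - (mu ^+ 2 - 2) * Y))
    (2 * m * f * g + h ^+ 2 * (2 * X - mu * Y)
       - 2 * h * (mu * X - (mu ^+ 2 - 2) * Y)
       + (mu ^+ 2 - 2) * X - (mu ^+ 3 - 3 * mu) * Y).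

(* Solving [eh - fg = 1] for one entry turns identities modulo the
   determinant into rational identities that [field] can check. *)
Lemma det1_cases {K : fieldType} {e f g h : K} : e * h - f * g = 1 ->
  (e != 0 /\ h = (1 + f * g) / e) \/ [/\ e = 0, f != 0 & g = - f^-1].
Proof.
move=> det1; have [e0|e0] := eqVneq e 0; last first.
  by left; split=> //; rewrite -det1 subrK mulrC mulKf.
right; rewrite e0 mul0r sub0r in det1.
have f0 : f != 0 by apply: contra_eq_neq det1 => ->; rewrite mul0r oppr0 eq_sym oner_eq0.
by split=> //; apply: (mulfI f0); rewrite mulrN mulfV // -det1 opprK.
Qed.

Lemma Ad_sum_numer1 (K : fieldType) (e f g h : K) : e * h - f * g = 1 ->
  Ad_sum_numer e f g h 1 1 0 = ((e + h) ^+ 2 - 4)%:M.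
Proof.
move=> det1; have [[e0 ->]|[-> f0 ->]] := det1_cases det1.
all: apply/matrixP => -[[|[|[|//]]] ?] -[[|[|[|//]]] ?].
all: by rewrite !mxE /= ?mulr1n ?mulr0n; field.
Qed.

Lemma Ad_sum_numerS (K : fieldType) (e f g h m X Y : K) :
  e * h - f * g = 1 ->
  let mu := e + h in
  (mu ^+ 2 - 4)%:M + Ad_mx3 e f g h *m Ad_sum_numer e f g h m X Y
  = Ad_sum_numer e f g h (m + 1) ((mu ^+ 2 - 1) * X - mu * Y + 1) (mu * X - Y).
Proof.
move=> det1 mu; rewrite /mu; have [[e0 ->]|[-> f0 ->]] := det1_cases det1.
all: apply/matrixP => -[[|[|[|//]]] ?] -[[|[|[|//]]] ?].
all: by rewrite !(mxE, big_ord_recl, big_ord0) /= ?mulr1n ?mulr0n; field.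
Qed.

Lemma chebS_pred (K : nzRingType) (k : nat) (v : K) :
  chebS (k.+1%:Z - 1) v = chebS_nat k v.
Proof. by rewrite -addn1 PoszD addrK. Qed.

Lemma chebS_natS (K : nzRingType) (k : nat) (v : K) :
  chebS_nat k.+1 v = v * chebS_nat k v - chebS (k%:Z - 1) v.
Proof. by case: k => [|k]; rewrite ?chebS_pred //= mulr1 subr0. Qed.

Lemma chebS_cassini (K : comNzRingType) (k : nat) (v : K) :
  chebS_nat k v ^+ 2 - v * (chebS_nat k v * chebS (k%:Z - 1) v)
    + chebS (k%:Z - 1) v ^+ 2 = 1.
Proof.
elim: k => [|k IH]; first by rewrite /=; ring.
by rewrite chebS_pred chebS_natS -IH; ring.
Qed.

Lemma chebS_natS_sqr (K : comNzRingType) (k : nat) (v : K) :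
  chebS_nat k.+1 v ^+ 2 = (v ^+ 2 - 1) * chebS_nat k v ^+ 2
    - v * (chebS_nat k v * chebS (k%:Z - 1) v) + 1.
Proof. by rewrite -{2}(chebS_cassini _ k v) chebS_natS; ring. Qed.

Lemma scale_sum_Ad_mx3 {K : fieldType} {e f g h : K} (k : nat) :
  e * h - f * g = 1 ->
  let mu := e + h in
  (mu ^+ 2 - 4) *: \sum_(i < k.+1) Ad_mx3 e f g h ^+ i
  = Ad_sum_numer e f g h k.+1%:R
      (chebS_nat k mu ^+ 2) (chebS_nat k mu * chebS (k%:Z - 1) mu).
Proof.
move=> det1 mu; elim: k => [|k IH].
  by rewrite big_ord1 expr0 scalemx1 /= expr1n mulr0 Ad_sum_numer1.
rewrite big_ord_recl expr0 scalerDr scalemx1.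
under eq_bigr => i _ do rewrite /= exprS.
rewrite -mulr_sumr scalerAr IH -mulmxE Ad_sum_numerS // natr1 /mu.
by rewrite chebS_natS_sqr chebS_pred chebS_natS; congr Ad_sum_numer; ring.
Qed.

Theorem proposition3p1 (R : realType) (M : 'M[R[i]]_2) (n : nat) :
  \det M = 1 ->
  let e := M 0 0 in let f := M 0 1 in let g := M 1 0 in let h := M 1 1 in
  let mu := \tr M in
  mu ^+ 2 != 4 ->
  (1 <= n)%N ->
  let X := chebS (n%:Z - 1) mu ^+ 2 in
  let Y := chebS (n%:Z - 1) mu * chebS (n%:Z - 2) mu in
  let nn : R[i] := n%:R in
  \sum_(i < n) (AdMx M) ^+ i =
  (mu ^+ 2 - 4)^-1 *: mx3
    (2 * nn * f * g + h ^+ 2 * (2 * X - mu * Y) - 2 * h * (mu * X - 2 * Y)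
       + (mu ^+ 2 - 2) * X - mu * Y)
    (2 * f * (nn * (e - h) + h * (2 * X - mu * Y) - mu * X + 2 * Y))
    (f ^+ 2 * (2 * nn - 2 * X + mu * Y))
    (- g * (nn * (h - e) - h * (2 * X - mu * Y) + mu * X - 2 * Y))
    (nn * (e - h) ^+ 2 + 2 * f * g * (2 * X - mu * Y))
    (f * (nn * (e - h) + h * (2 * X - mu * Y) - mu * X + (mu ^+ 2 - 2) * Y))
    (g ^+ 2 * (2 * nn - 2 * X + mu * Y))
    (- 2 * g * (nn * (h - e) - h * (2 * X - mu * Y) + mu * X
                - (mu ^+ 2 - 2) * Y))
    (2 * nn * f * g + h ^+ 2 * (2 * X - mu * Y)
       - 2 * h * (mu * X - (mu ^+ 2 - 2) * Y)
       + (mu ^+ 2 - 2) * X - (mu ^+ 3 - 3 * mu) * Y).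
Proof.
move=> detM e f g h mu mu2; case: n => [//|k] _ X Y nn.
have det1 : e * h - f * g = 1 by rewrite -detM (mx2_eta M) det_mx2.
have mu_eh : mu = e + h by rewrite /mu (mx2_eta M) mxtrace_mx2.
have AdM : AdMx M = Ad_mx3 e f g h by rewrite (mx2_eta M) AdMx_mx2.
have k_pred2 : k.+1%:Z - 2 = k%:Z - 1.
  by rewrite -addn1 PoszD -addrA; congr (_ + _).
rewrite -subr_eq0 mu_eh in mu2.
rewrite /X /Y /nn AdM chebS_pred k_pred2 mu_eh.
by apply: (canRL (scalerK mu2)); exact: (scale_sum_Ad_mx3 k det1).
Qed.
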